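(* For every integer $n\ge 2$, the functional $$H_n=\sum_{i=1}^{n-1}\sum_{j=1}^{n-i}e_{i,j}^*\in\mathfrak{gl}(n)^*$$ is regular on $\mathfrak{gl}(n)$, i.e. $\dim\ker(B_{H_n})=n$.
   Context: Over $\mathbb{C}$. $e_{i,j}^*(X)=X_{i,j}$. For $f\in\mathfrak{g}^*$, $B_f(x,y)=f([x,y])$ and $\ker(B_f)=\{x\in\mathfrak{g}: f([x,y])=0\ \forall y\in\mathfrak{g}\}$. $f$ is regular if $\dim\ker(B_f)=\min_{g\in\mathfrak{g}^*}\dim\ker(B_g)$; for $\mathfrak{gl}(n)$ this minimum equals $n$. *)

From HB Require Import structures.
From mathcomp Require Import all_boot all_order all_algebra all_field.
Set Implicit Arguments. Unset Strict Implicit. Unset Printing Implicit Defensive.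
Import GRing.Theory Num.Theory.
Local Open Scope ring_scope.

Definition lie_bracket (F : nzRingType) (n : nat) (X Y : 'M[F]_n) : 'M[F]_n :=
  X *m Y - Y *m X.

(* The functional H_n = sum_{i=1}^{n-1} sum_{j=1}^{n-i} e_{i,j}^*.
   With 0-based indices i' = i-1, j' = j-1 the range is i' + j' <= n - 2,
   i.e. i' + j' + 1 < n. *)
Definition H_functional (F : nzRingType) (n : nat) (X : 'M[F]_n) : F :=
  \sum_(i < n) \sum_(j < n | ((i + j).+1 < n)%N) X i j.

Definition in_ker_B (F : nzRingType) (n : nat) (f : 'M[F]_n -> F) (X : 'M[F]_n) : Prop :=
  forall Y : 'M[F]_n, f (lie_bracket X Y) = 0.

From HB Require Import structures.
From mathcomp Require Import all_boot all_order all_algebra all_field.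
From mathcomp Require Import zify.
Import GRing.Theory Num.Theory.
Local Open Scope ring_scope.

(* 1. With A the 0/1 matrix A_{ij} = [i + j <= n - 2] (0-based indices),
      H_n(Z) = tr(Z A), and the kernel of any trace form Z |-> tr(Z A) is
      the centralizer {X | X A = A X}.
   2. A has a "group inverse" M (A M = M A = E, A M A = A, M A M = M, where
      E = diag(1, ..., 1, 0)); in any ring an element commuting with P
      commutes with its group inverse, so A and M have the same centralizer.
   3. If a square matrix M admits a cyclic row vector w, i.e. the Krylov
      family w, w M, ..., w M^(N-1) is free, then the centralizer of M is the
      span of 1, M, ..., M^(N-1) and has dimension N.
   4. For M above, w = e_0 + e_(N-1) is cyclic: the vectors e_0 M^k (k < N-1)
      are triangular with respect to a zigzag ordering of the coordinates,
      and e_(N-1) M = 0.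
   The theorem follows by combining 1-4. *)

Ltac case_condition b :=
  lazymatch b with
  | true => fail
  | false => fail
  | context [if _ then _ else _] => fail
  | _ => case: (boolP b) => ?
  end.

Ltac case_conditions :=
  repeat match goal with
  | |- context [if ?b then _ else _] => case_condition b
  | |- context [nat_of_bool ?b] => case_condition b
  end.

Ltac solve_entry :=
  case_conditions;
  rewrite /= ?subr0 ?sub0r ?subrr ?oppr0 ?mulr0 ?mul0r ?mulr1 ?mul1r //;
  exfalso; lia.

Section TraceForm.
Context {R : comNzRingType} {N : nat}.

Lemma mxtrace_delta_mull (i j : 'I_N) (D : 'M[R]_N) :
  \tr (delta_mx i j *m D) = D j i.
Proof.
rewrite /mxtrace (bigD1 i) //= big1 ?addr0 => [|k /negPf neq_ki].
  rewrite mxE (bigD1 j) //= big1 ?addr0 => [|l /negPf neq_lj].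
    by rewrite mxE !eqxx mul1r.
  by rewrite mxE neq_lj andbF mul0r.
by rewrite mxE big1 // => l _; rewrite mxE neq_ki mul0r.
Qed.

(* B_f(X, Y) = tr(Y (A X - X A)), which vanishes for all Y iff X A = A X. *)
Lemma kerB_trace_form (f : 'M[R]_N -> R) (A : 'M[R]_N) :
  (forall Z, f Z = \tr (Z *m A)) ->
  forall X, in_ker_B f X <-> X *m A = A *m X.
Proof.
move=> fE X.
have fXY Y : f (lie_bracket X Y) = \tr (Y *m (A *m X - X *m A)).
  rewrite fE /lie_bracket mulmxBl mulmxBr !linearB /= -!mulmxA.
  by rewrite mxtrace_mulC -mulmxA.
split=> [kerX | commXA Y]; last by rewrite fXY commXA subrr mulmx0 mxtrace0.
apply/eqP; rewrite eq_sym -subr_eq0; apply/eqP/matrixP => i j.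
by have := kerX (delta_mx j i); rewrite fXY mxtrace_delta_mull => ->; rewrite mxE.
Qed.

End TraceForm.

(* If P and Q are group inverses of each other (they commute, PQP = P and
   QPQ = Q), every element commuting with P commutes with Q: it commutes with
   the idempotent PQ, hence with Q = Q (PQ). *)
Lemma comm_group_inverse (R : pzRingType) (P Q X : R) :
  P * Q = Q * P -> P * Q * P = P -> Q * P * Q = Q ->
  GRing.comm X P -> GRing.comm X Q.
Proof.
rewrite /GRing.comm => commPQ PQP QPQ commXP.
have commXE : X * (P * Q) = P * Q * X.
  have XE : X * (P * Q) = P * Q * X * (P * Q).
    by rewrite mulrA commXP [RHS]mulrA -(mulrA (P * Q) X P) commXP mulrA PQP.
  have EX : P * Q * X = P * Q * X * (P * Q).
    rewrite commPQ -(mulrA Q P X) -commXP !mulrA -[Q * X * P * Q]mulrA.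
    by rewrite -[Q * X * (P * Q) * P]mulrA PQP.
  by rewrite XE -EX.
rewrite -[in LHS]QPQ -commPQ mulrA commXE commPQ -(mulrA Q P X) -commXP.
by rewrite -mulrA -(mulrA X P Q) commXE !mulrA QPQ.
Qed.

Definition mxpowers {F : fieldType} {N : nat} (M : 'M[F]_N) : N.-tuple 'M[F]_N :=
  [tuple M ^+ i | i < N].
Definition krylov {F : fieldType} {N : nat} (M : 'M[F]_N) (w : 'rV[F]_N) :
  N.-tuple 'rV[F]_N := [tuple w *m M ^+ i | i < N].

Section CyclicCentralizer.
Context {F : fieldType} {N : nat} {M : 'M[F]_N} {w : 'rV[F]_N}.
Hypothesis krylov_free : free (krylov M w).

Lemma krylov_span : <<krylov M w>>%VS = fullv.
Proof.
apply/eqP; rewrite eqEdim subvf dimvf (eqP krylov_free) size_tuple.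
by rewrite dim_matrix; lia.
Qed.

(* Applying w to a relation between powers of M gives a Krylov relation. *)
Lemma mxpowers_free : free (mxpowers M).
Proof.
apply/freeP => c sum_c0; move/freeP: krylov_free; apply.
rewrite -[RHS](mulmx0 _ w) -sum_c0 mulmx_sumr.
by apply: eq_bigr => i _; rewrite !nth_mktuple scalemxAr.
Qed.

(* If X commutes with M, write w X = p(M) applied to w; then X - p(M)
   commutes with M and kills every w M^i, hence kills every row vector. *)
Lemma centralizer_mxpowers X : X \in <<mxpowers M>>%VS <-> X *m M = M *m X.
Proof.
split=> [/coord_span -> | commXM].
  rewrite mulmx_suml mulmx_sumr; apply: eq_bigr => i _.
  by rewrite nth_mktuple -scalemxAl -scalemxAr !mulmxE -exprSr exprS.
pose c i := coord (krylov M w) i (w *m X).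
have wXE : w *m X = \sum_i c i *: (w *m M ^+ i).
  rewrite {1}(coord_span (_ : w *m X \in <<krylov M w>>%VS)) ?krylov_span ?memvf //.
  by apply: eq_bigr => i _; rewrite nth_mktuple.
suff -> : X = \sum_i c i *: M ^+ i.
  apply: rpred_sum => i _; apply/rpredZ/memv_span.
  by rewrite -[M ^+ i](tnth_mktuple (fun i : 'I_N => M ^+ i)) mem_tnth.
set P := \sum_i c i *: M ^+ i; apply/eqP; rewrite -subr_eq0; apply/eqP.
have commZ k : (X - P) *m M ^+ k = M ^+ k *m (X - P).
  have commZM : (X - P) *m M = M *m (X - P).
    rewrite mulmxBl mulmxBr commXM /P mulmx_suml mulmx_sumr; congr (_ - _).
    apply: eq_bigr => i _.
    by rewrite -scalemxAl -scalemxAr !mulmxE -exprSr exprS.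
  by move: commZM; rewrite !mulmxE; apply: commrX.
have wZ : w *m (X - P) = 0.
  rewrite mulmxBr wXE /P mulmx_sumr; apply/eqP; rewrite subr_eq0; apply/eqP.
  by apply: eq_bigr => i _; rewrite scalemxAr.
apply/row_matrixP => i; rewrite row0 rowE.
have := memvf (delta_mx 0 i : 'rV[F]_N); rewrite -krylov_span => /coord_span ->.
rewrite mulmx_suml big1 // => j _.
by rewrite nth_mktuple -scalemxAl -mulmxA -commZ mulmxA wZ mul0mx scaler0.
Qed.

Lemma dim_mxpowers : \dim <<mxpowers M>>%VS = N.
Proof. by rewrite (eqP mxpowers_free) size_tuple. Qed.
End CyclicCentralizer.

Lemma triangular_free (F : fieldType) (N m : nat) (v : nat -> 'rV[F]_N)
    (pivot : nat -> 'I_N) :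
  (forall i j, (i < j < m)%N -> v i 0 (pivot j) = 0) ->
  (forall i, (i < m)%N -> v i 0 (pivot i) != 0) ->
  forall c : nat -> F, \sum_(i < m) c i *: v i = 0 -> forall i, (i < m)%N -> c i = 0.
Proof.
elim: m => [//|m IHm] below nz_pivot c; rewrite big_ord_recr /= => sum_c0.
have cm0 : c m = 0.
  have := congr1 (fun u : 'rV[F]_N => u 0 (pivot m)) sum_c0.
  rewrite !mxE summxE big1 ?add0r => [/eqP|i _]; last first.
    by rewrite mxE below ?mulr0 //; move: (ltn_ord i); lia.
  by rewrite mulf_eq0 (negPf (nz_pivot m _)) // orbF => /eqP.
move: sum_c0; rewrite cm0 scale0r addr0 => /IHm IH i; rewrite ltnS leq_eqVlt.
case/orP=> [/eqP -> // | lt_im]; apply: IH => // [j k ? | j ?].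
  by apply: below; lia.
by apply: nz_pivot; lia.
Qed.

(* The matrices attached to H_n: [Hmx N] represents the functional, [Hinv N]
   is its group inverse and [Eproj N] = diag(1, ..., 1, 0). *)
Section HnMatrices.
Variable R : comNzRingType.

Definition Hmx N : 'M[R]_N := \matrix_(i, j) ((i + j).+1 < N)%N%:R.

Definition Hinv N : 'M[R]_N := \matrix_(i, j)
  (((i + j).+2 == N)%N%:R - [&& (i + j).+1 == N, 0 < i & 0 < j]%N%:R).

Definition Eproj N : 'M[R]_N := \matrix_(i, j) ((i == j :> nat) && (i.+1 < N))%N%:R.

Lemma H_functional_trace N (Z : 'M[R]_N) : H_functional Z = \tr (Z *m Hmx N).
Proof.
rewrite /H_functional /mxtrace; apply: eq_bigr => i _; rewrite mxE big_mkcond.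
by apply: eq_bigr => j _; rewrite mxE addnC; case: ifP; rewrite ?mulr1 ?mulr0.
Qed.

Lemma row_mul_Hinv n (v : 'rV[R]_n.+1) (j : 'I_n.+1) :
  (v *m Hinv n.+1) 0 j =
    (if (j < n)%N then v 0 (inord (n - j.+1)) else 0)
  - (if (0 < j < n)%N then v 0 (inord (n - j)) else 0).
Proof.
rewrite mxE; under eq_bigr do rewrite mxE mulrBr; rewrite sumrB.
congr (_ - _); case: ifP => cond_j.
- rewrite (big_only1 (inord (n - j.+1))) // => [|k neq_k _].
    by rewrite inordK; [solve_entry | lia].
  by case_conditions; rewrite ?mulr0 //; case/eqP: neq_k; apply/val_inj;
    rewrite /= inordK; lia.
- by rewrite big1 // => k _; solve_entry.
- rewrite (big_only1 (inord (n - j))) // => [|k neq_k _].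
    by rewrite inordK; [solve_entry | lia].
  by case_conditions; rewrite ?mulr0 //; case/eqP: neq_k; apply/val_inj;
    rewrite /= inordK; lia.
- by rewrite big1 // => k _; solve_entry.
Qed.

Lemma trmx_Hmx N : (Hmx N)^T = Hmx N.
Proof. by apply/matrixP => i j; rewrite !mxE addnC. Qed.

Lemma trmx_Hinv N : (Hinv N)^T = Hinv N.
Proof. by apply/matrixP => i j; rewrite !mxE addnC; solve_entry. Qed.

Lemma trmx_Eproj N : (Eproj N)^T = Eproj N.
Proof. by apply/matrixP => i j; rewrite !mxE; solve_entry. Qed.

Lemma mul_Eproj_mx N (X : 'M[R]_N) i j :
  (Eproj N *m X) i j = if (i.+1 < N)%N then X i j else 0.
Proof.
rewrite mxE (big_only1 i) // => [|k neq_ki _]; rewrite mxE.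
  by rewrite eqxx /=; case: ifP; rewrite ?mul1r ?mul0r.
by rewrite eq_sym (inj_eq val_inj) (negPf neq_ki) mul0r.
Qed.

Lemma mul_mx_Eproj m N (X : 'M[R]_(m, N)) i j :
  (X *m Eproj N) i j = if (j.+1 < N)%N then X i j else 0.
Proof.
rewrite mxE (big_only1 j) // => [|k neq_kj _]; rewrite mxE.
  by rewrite eqxx /=; case: ifP; rewrite ?mulr1 ?mulr0.
by rewrite (inj_eq val_inj) (negPf neq_kj) mulr0.
Qed.

Lemma Hmx_Hinv n : Hmx n.+1 *m Hinv n.+1 = Eproj n.+1.
Proof.
apply/matrixP => i j; transitivity (row i (Hmx n.+1 *m Hinv n.+1) 0 j).
  by rewrite [RHS]mxE.
by rewrite row_mul row_mul_Hinv !mxE !inordK ?ltnS ?leq_subr //; solve_entry.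
Qed.

Lemma Hinv_Hmx n : Hinv n.+1 *m Hmx n.+1 = Eproj n.+1.
Proof. by rewrite -[LHS]trmxK trmx_mul trmx_Hmx trmx_Hinv Hmx_Hinv trmx_Eproj. Qed.

Lemma Eproj_Hmx N : Eproj N *m Hmx N = Hmx N.
Proof. by apply/matrixP => i j; rewrite mul_Eproj_mx !mxE; solve_entry. Qed.

Lemma Eproj_Hinv N : Eproj N *m Hinv N = Hinv N.
Proof. by apply/matrixP => i j; rewrite mul_Eproj_mx !mxE; solve_entry. Qed.

(* [Hmx] and [Hinv] are group inverses of each other, so they have the same
   centralizer. *)
Lemma commute_Hmx_Hinv n (X : 'M[R]_n.+1) :
  X *m Hmx n.+1 = Hmx n.+1 *m X <-> X *m Hinv n.+1 = Hinv n.+1 *m X.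
Proof.
have AM : Hmx n.+1 * Hinv n.+1 = Hinv n.+1 * Hmx n.+1.
  by rewrite -!mulmxE Hmx_Hinv Hinv_Hmx.
have AMA : Hmx n.+1 * Hinv n.+1 * Hmx n.+1 = Hmx n.+1.
  by rewrite -!mulmxE Hmx_Hinv Eproj_Hmx.
have MAM : Hinv n.+1 * Hmx n.+1 * Hinv n.+1 = Hinv n.+1.
  by rewrite -!mulmxE Hinv_Hmx Eproj_Hinv.
rewrite !mulmxE; split; first exact: comm_group_inverse.
by apply: comm_group_inverse => //; rewrite AM.
Qed.
End HnMatrices.

Section ZigzagKrylov.
Variables (F : fieldType) (n : nat).
Hypothesis n_gt0 : (0 < n)%N.

(* The pivot of e_0 M^k is the coordinate [zigzag k]: the coordinates are
   visited in the order 0, n-1, 1, n-2, 2, ...; [zigzag_rank] is the inverse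
   ordering, with the last coordinate n ranked last. *)
Definition zigzag (k : nat) : nat := if odd k then (n.-1 - k./2)%N else k./2.

Definition zigzag_rank (j : nat) : nat :=
  if j == n then n else if (j.*2 < n)%N then j.*2 else (n.-1 - j).*2.+1.

Lemma zigzag_rankK k : (k < n)%N -> zigzag_rank (zigzag k) = k.
Proof.
by move=> lt_kn; rewrite /zigzag; case: ifP => odd_k; rewrite /zigzag_rank;
  case_conditions; lia.
Qed.

Lemma zigzag_lt k : (k < n)%N -> (zigzag k < n)%N.
Proof. by move=> lt_kn; rewrite /zigzag; case_conditions; lia. Qed.

Definition e_first : 'rV[F]_n.+1 := delta_mx 0 ord0.
Definition e_last : 'rV[F]_n.+1 := delta_mx 0 ord_max.
Definition orbit (k : nat) : 'rV[F]_n.+1 := e_first *m Hinv F n.+1 ^+ k.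

Lemma orbitS k : orbit k.+1 = orbit k *m Hinv F n.+1.
Proof. by rewrite /orbit exprSr -mulmxE mulmxA. Qed.

(* e_0 M^k vanishes at every coordinate of zigzag rank > k and is nonzero at
   its pivot: each multiplication by M moves the pivot one step along the
   zigzag, as read off from [row_mul_Hinv]. *)
Lemma orbit_triangular k : (k < n)%N ->
  (forall j : 'I_n.+1, (k < zigzag_rank j)%N -> orbit k 0 j = 0) /\
  orbit k 0 (inord (zigzag k)) != 0.
Proof.
elim: k => [_ | k IHk lt_k1n].
  rewrite /orbit expr0 mulmx1; split=> [j rank_j | ]; rewrite mxE.
    suff /negPf -> : j != ord0 by rewrite andbF.
    by apply: contraTneq rank_j => ->; rewrite /zigzag_rank /=; case_conditions; lia.
  by rewrite (_ : inord _ = ord0) ?eqxx ?oner_eq0 //; apply/val_inj; rewrite /= inordK.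
have [zero_below pivot_nz] := IHk (ltnW lt_k1n).
have below_rank (i : nat) : (i <= n)%N -> (k < zigzag_rank i)%N ->
    orbit k 0 (inord i) = 0.
  by move=> le_in rank_i; rewrite zero_below // inordK // ltnS.
split=> [j rank_j | ].
  rewrite orbitS row_mul_Hinv; case_conditions; rewrite ?below_rank ?subr0 //;
    by move: rank_j; rewrite /zigzag_rank; case_conditions; lia.
have lt_zz : (zigzag k.+1 < n)%N by rewrite /zigzag; case_conditions; lia.
rewrite orbitS row_mul_Hinv inordK ?lt_zz; last lia.
have [odd_k1 | even_k1] := boolP (odd k.+1).
  have -> : orbit k 0 (inord (n - zigzag k.+1)) = 0.
    by apply: below_rank; rewrite /zigzag_rank /zigzag; case_conditions; lia.
  have -> : (n - (zigzag k.+1).+1 = zigzag k)%N by rewrite /zigzag; case_conditions; lia.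
  by rewrite if_same subr0.
have -> : orbit k 0 (inord (n - (zigzag k.+1).+1)) = 0.
  by apply: below_rank; rewrite /zigzag_rank /zigzag; case_conditions; lia.
have -> : (n - zigzag k.+1 = zigzag k)%N by rewrite /zigzag; case_conditions; lia.
have -> : (0 < zigzag k.+1)%N by rewrite /zigzag; case_conditions; lia.
by rewrite sub0r oppr_eq0.
Qed.

Lemma orbit_free (c : nat -> F) :
  \sum_(k < n) c k *: orbit k = 0 -> forall k, (k < n)%N -> c k = 0.
Proof.
apply: (@triangular_free F n.+1 n orbit (fun k => inord (zigzag k))).
  move=> i j /andP[lt_ij lt_jn].
  have [zero_below _] := orbit_triangular i (ltn_trans lt_ij lt_jn).
  by apply: zero_below; rewrite inordK ?zigzag_rankK // ltnS ltnW ?zigzag_lt.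
by move=> i lt_in; have [] := orbit_triangular i lt_in.
Qed.

Lemma e_last_Hinv : e_last *m Hinv F n.+1 = 0.
Proof.
apply/rowP => j; rewrite row_mul_Hinv !mxE -!val_eqE /=.
by rewrite !inordK ?ltnS ?leq_subr //; solve_entry.
Qed.

Lemma orbit_last k : orbit k 0 ord_max = 0.
Proof.
case: k => [|k]; last by rewrite orbitS row_mul_Hinv /=; solve_entry.
by rewrite /orbit expr0 mulmx1 mxE -!val_eqE /=; solve_entry.
Qed.

(* A row vector with vanishing last coordinate is fixed by [Eproj] = M A, so
   it cannot lie in the left kernel of M unless it is zero. *)
Lemma left_kernel_Hinv (z : 'rV[F]_n.+1) :
  z 0 ord_max = 0 -> z *m Hinv F n.+1 = 0 -> z = 0.
Proof.
move=> z_last zM0; suff -> : z = z *m Eproj F n.+1.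
  by rewrite -Hinv_Hmx mulmxA zM0 mul0mx.
apply/rowP => j; rewrite mul_mx_Eproj; case: ifP => // j_last.
by rewrite -z_last; congr (z 0 _); apply/val_inj => /=; move: (ltn_ord j) j_last; lia.
Qed.

(* In a relation sum_k c_k w M^k = 0, the last coordinate gives c_0 = 0;
   the remaining relation is z M = 0 for z = sum_k c_(k+1) e_0 M^k, whence
   z = 0 and the triangularity of the orbit gives c = 0. *)
Lemma krylov_Hinv_free : free (krylov (Hinv F n.+1) (e_first + e_last)).
Proof.
apply/freeP => c sum_c0.
have krylov_lift (i : 'I_n) :
    (krylov (Hinv F n.+1) (e_first + e_last))`_(lift ord0 i) = orbit i.+1.
  rewrite nth_mktuple lift0 /orbit exprS -!mulmxE mulmxA mulmxDl e_last_Hinv.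
  by rewrite addr0 -mulmxA.
have shifted : c ord0 *: (e_first + e_last)
    + \sum_(i < n) c (lift ord0 i) *: orbit i.+1 = 0.
  rewrite -[RHS]sum_c0 big_ord_recl nth_mktuple expr0 mulmx1; congr (_ + _).
  by apply: eq_bigr => i _; rewrite krylov_lift.
have c0 : c ord0 = 0.
  have := congr1 (fun u : 'rV[F]_n.+1 => u 0 ord_max) shifted.
  rewrite !mxE summxE big1 => [|i _]; last by rewrite mxE orbit_last mulr0.
  by rewrite -!val_eqE /= eqxx gtn_eqF // add0r addr0 mulr1.
move: shifted; rewrite c0 scale0r add0r => shifted.
have z0 : \sum_(i < n) c (lift ord0 i) *: orbit i = 0.
  apply: left_kernel_Hinv.
    by rewrite summxE big1 // => i _; rewrite mxE orbit_last mulr0.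
  rewrite -[RHS]shifted mulmx_suml; apply: eq_bigr => i _.
  by rewrite -scalemxAl orbitS.
case=> [[|k] lt_k]; first by rewrite -c0; congr c; apply: val_inj.
have inord_k : inord k.+1 = Ordinal lt_k by apply: val_inj; rewrite /= inordK.
rewrite -inord_k; apply: (orbit_free (fun i => c (inord i.+1))) (ltnSE lt_k).
rewrite -[RHS]z0; apply: eq_bigr => i _; congr (c _ *: _).
by apply: val_inj; rewrite /= inordK // ltnS.
Qed.
End ZigzagKrylov.

Theorem theorem3p18 (C : numClosedFieldType) (n : nat) (hn : (2 <= n)%N) :
  exists K : {vspace 'M[C]_n},
    (forall X : 'M[C]_n, X \in K <-> in_ker_B (@H_functional C n) X) /\
    \dim K = n.
Proof.
case: n hn => [|n] // /ltnSE n_gt0.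
have cyclic := @krylov_Hinv_free C n n_gt0.
exists <<mxpowers (Hinv C n.+1)>>%VS; split; last exact: dim_mxpowers cyclic.
move=> X; apply: iff_trans (centralizer_mxpowers cyclic X) _.
apply: iff_trans (iff_sym (@commute_Hmx_Hinv C n X)) _.
apply: iff_sym; apply: kerB_trace_form; exact: H_functional_trace.
Qed.
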